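(* Let $q$ be a prime power, $u,v$ non-zero in $\mathbb{F}_q$, and write $\mathrm{Rad}(q-1)=k\,p_1\cdots p_s$ with $k$ a divisor and $p_1,\ldots,p_s$ distinct primes. Let $\delta_2=1-2\sum_{i=1}^s 1/p_i$ and $M=M_{q-1,q-1}$. Then $$M\geq \sum_{i=1}^s\{[M_{p_ik,k}-\theta(p_i)M_{k,k}]+[M_{k,p_ik}-\theta(p_i)M_{k,k}]\}+\delta_2M_{k,k}.$$
   Context: $\mathrm{Rad}(m)$ is the product of the distinct primes dividing $m$; $\theta(m)=\phi(m)/m$. For a divisor $e$ of $q-1$, a non-zero $a\in\mathbb{F}_q$ is $e$-free if $a=b^d$ with $b\in\mathbb{F}_q$, $d\mid e$ implies $d=1$ (primitive means $(q-1)$-free). For divisors $e_1,e_2$ of $q-1$, $M_{e_1,e_2}$ is the number of non-zero $a\in\mathbb{F}_q$ such that $a$ is $e_1$-free and $ua+va^{-1}$ is (non-zero and) $e_2$-free; thus $M_{q-1,q-1}$ is the number of primitive $a$ with $ua+va^{-1}$ primitive. *)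

From mathcomp Require Import all_boot all_order all_algebra all_field.
Set Implicit Arguments. Unset Strict Implicit. Unset Printing Implicit Defensive.
Import Order.TTheory GRing.Theory Num.Theory.
Local Open Scope ring_scope.

Definition Rad (m : nat) : nat := (\prod_(p <- primes m) p)%N.

Definition theta (m : nat) : rat := (totient m)%:R / m%:R.

(* a is e-free : a <> 0 and (a = b^d with d | e) implies d = 1.
   Divisors d of e (e > 0) satisfy d <= e, so d ranges over 'I_e.+1. *)
Definition efree (F : finFieldType) (e : nat) (a : F) : bool :=
  (a != 0) &&
  [forall d : 'I_e.+1,
     ((d %| e)%N && [exists b : F, a == b ^+ d]) ==> (d == 1%N :> nat)].

Definition Mcount (F : finFieldType) (u v : F) (e1 e2 : nat) : nat :=
  #|[set a : F | (a != 0) && efree e1 a && efree e2 (u * a + v * a^-1)]|.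

From mathcomp Require Import all_boot all_order all_algebra all_field.
From mathcomp Require Import ring.
Set Implicit Arguments. Unset Strict Implicit. Unset Printing Implicit Defensive.
Import Order.TTheory GRing.Theory Num.Theory.
Local Open Scope ring_scope.

(* Being [e]-free only depends on the prime divisors of [e].  Hence [M_{q-1,q-1}]
   counts the elements [a] of the set [S] counted by [M_{k,k}] such that, for
   every [i], both [a] and [u a + v a^-1] are [p_i]-free.  The rest of [S] is
   covered by the [2s] sets of elements failing one of these conditions, of
   sizes [M_{k,k} - M_{p_i k,k}] and [M_{k,k} - M_{k,p_i k}]; since
   [theta(p) = 1 - 1/p], this union bound is the claimed inequality. *)

Lemma Rad_gt0 (m : nat) : (0 < Rad m)%N.
Proof.
by rewrite /Rad big_seq prodn_cond_gt0 // => p; rewrite mem_primes => /andP[/prime_gt0].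
Qed.

Lemma primes_Rad (m : nat) : primes (Rad m) =i primes m.
Proof.
move=> r; rewrite mem_primes Rad_gt0 /=.
apply/andP/idP => [[r_pr] | r_in]; last first.
  by move: (r_in); rewrite mem_primes => /andP[-> _]; rewrite /Rad (big_rem r) ?dvdn_mulr.
rewrite /Rad Euclid_dvd_prod // big_has => /hasP[p p_in].
have p_pr : prime p by move: p_in; rewrite mem_primes => /andP[].
by rewrite dvdn_prime2 // => /eqP->.
Qed.

Lemma theta_prime (p : nat) : prime p -> theta p = 1 - p%:R^-1.
Proof.
move=> p_pr; rewrite /theta totient_prime // -subn1 natrB ?prime_gt0 //.
by rewrite mulrBl mul1r divff // pnatr_eq0 -lt0n prime_gt0.
Qed.

Lemma leq_card_sieve (T : finType) (I : Type) (s : seq I) (S : {set T}) (X : I -> {set T}) :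
  (#|S| <= #|S :&: \bigcap_(i <- s) X i| + \sum_(i <- s) #|S :\: X i|)%N.
Proof.
elim: s => [|i s IH]; first by rewrite !big_nil setIT addn0.
rewrite !big_cons addnA; apply: (leq_trans IH); rewrite leq_add2r.
rewrite -(cardsID (X i) (S :&: _)) setIAC -setIA leq_add2l.
exact/subset_leq_card/setSD/subsetIl.
Qed.

Section FreeElements.

Variable F : finFieldType.
Implicit Types (a b : F) (e m n : nat).

Lemma efreeE e a : (0 < e)%N ->
  efree e a = (a != 0) && all (fun r => ~~ [exists b, a == b ^+ r]) (primes e).
Proof.
move=> e_gt0; congr (_ && _); apply/forallP/allP => [nopow r | nopow d].
  rewrite mem_primes => /and3P[r_pr _ r_dvd]; apply/negP => pow_r.
  have r_lt : (r < e.+1)%N by rewrite ltnS dvdn_leq.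
  have /implyP := nopow (Ordinal r_lt); rewrite /= r_dvd pow_r => /(_ isT) /eqP r1.
  by rewrite r1 in r_pr.
apply/implyP => /andP[d_dvd /existsP[b /eqP a_pow]]; apply/negPn/negP => d_neq1.
have d_gt1 : (1 < d)%N by rewrite ltn_neqAle eq_sym d_neq1 (dvdn_gt0 e_gt0 d_dvd).
have pd_in : pdiv d \in primes e.
  by rewrite mem_primes pdiv_prime // e_gt0 (dvdn_trans (pdiv_dvd d) d_dvd).
move/negP: (nopow _ pd_in); apply; apply/existsP; exists (b ^+ (d %/ pdiv d)).
by rewrite a_pow -exprM divnK ?pdiv_dvd.
Qed.

Lemma eq_efree e1 e2 a : (0 < e1)%N -> (0 < e2)%N -> primes e1 =i primes e2 ->
  efree e1 a = efree e2 a.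
Proof. by move=> e1_gt0 e2_gt0 eq_pr; rewrite !efreeE // (eq_all_r eq_pr). Qed.

Lemma efreeM m n a : (0 < m)%N -> (0 < n)%N ->
  efree (m * n) a = efree m a && efree n a.
Proof.
move=> m_gt0 n_gt0; have mn_gt0 : (0 < m * n)%N by rewrite muln_gt0 m_gt0.
have pr_mn : primes (m * n) =i primes m ++ primes n.
  by move=> r; rewrite mem_cat primesM.
by rewrite !efreeE // (eq_all_r pr_mn) all_cat andbACA andbb.
Qed.

Lemma efree_Rad e a : (0 < e)%N -> efree (Rad e) a = efree e a.
Proof. by move=> e_gt0; apply: eq_efree (Rad_gt0 e) e_gt0 (primes_Rad e). Qed.

Variables u v : F.

Definition Mset e1 e2 : {set F} :=
  [set a | (a != 0) && efree e1 a && efree e2 (u * a + v * a^-1)].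

Lemma McountE e1 e2 : Mcount u v e1 e2 = #|Mset e1 e2|.
Proof. by []. Qed.

Lemma MsetM e1 e2 m n : (0 < e1)%N -> (0 < e2)%N -> (0 < m)%N -> (0 < n)%N ->
  Mset (m * e1) (n * e2) = Mset e1 e2 :&: Mset m n.
Proof.
move=> e1_gt0 e2_gt0 m_gt0 n_gt0; apply/setP => a; rewrite !inE !efreeM //.
by case: (a != 0); case: (efree e1 a); case: (efree m a) => //=; rewrite andbC.
Qed.

Lemma MsetMl e1 e2 m : (0 < e1)%N -> (0 < e2)%N -> (0 < m)%N ->
  Mset (m * e1) e2 = Mset e1 e2 :&: Mset m 1.
Proof. by move=> *; rewrite -{1}[e2]mul1n MsetM. Qed.

Lemma MsetMr e1 e2 n : (0 < e1)%N -> (0 < e2)%N -> (0 < n)%N ->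
  Mset e1 (n * e2) = Mset e1 e2 :&: Mset 1 n.
Proof. by move=> *; rewrite -{1}[e1]mul1n MsetM. Qed.

Lemma Mset_Rad e1 e2 : (0 < e1)%N -> (0 < e2)%N -> Mset (Rad e1) (Rad e2) = Mset e1 e2.
Proof. by move=> e1_gt0 e2_gt0; apply/setP => a; rewrite !inE !efree_Rad. Qed.

Lemma Mset_prod e s : (0 < e)%N -> all (fun p => 0 < p)%N s ->
  Mset (e * \prod_(p <- s) p) (e * \prod_(p <- s) p)
    = Mset e e :&: \bigcap_(p <- s) (Mset p 1 :&: Mset 1 p).
Proof.
move=> e_gt0; elim: s => [|p s IH] /=; first by rewrite !big_nil muln1 setIT.
move=> /andP[p_gt0 s_gt0]; have eP_gt0 : (0 < e * \prod_(q <- s) q)%N.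
  by rewrite muln_gt0 e_gt0 big_seq prodn_cond_gt0 // => q /(allP s_gt0).
have peP_gt0 : (0 < p * (e * \prod_(q <- s) q))%N by rewrite muln_gt0 p_gt0.
rewrite !big_cons mulnCA MsetMr // MsetMl // IH //.
by rewrite -setIA -setIA (setIC (\bigcap_(q <- s) _)).
Qed.

Lemma card_Mset_sieve e s : (0 < e)%N -> all (fun p => 0 < p)%N s ->
  (#|Mset e e| <= #|Mset (e * \prod_(p <- s) p) (e * \prod_(p <- s) p)|
                  + \sum_(p <- s) (#|Mset e e :\: Mset p 1| + #|Mset e e :\: Mset 1 p|))%N.
Proof.
move=> e_gt0 s_gt0; rewrite Mset_prod //.
apply: leq_trans (leq_card_sieve s _ (fun p => Mset p 1 :&: Mset 1 p)) _.
by rewrite leq_add2l; apply: leq_sum => p _; rewrite setDIr; apply: leq_card_setU.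
Qed.

End FreeElements.

Lemma sum_sieve_weights (R : comPzRingType) (I : Type) (s : seq I) (c a b : I -> R) (x : R) :
  \sum_(i <- s) ((a i - (1 - c i) * x) + (b i - (1 - c i) * x))
    + (1 - 2 * \sum_(i <- s) c i) * x
  = x - \sum_(i <- s) ((x - a i) + (x - b i)).
Proof.
have -> : \sum_(i <- s) ((a i - (1 - c i) * x) + (b i - (1 - c i) * x))
          = 2 * (\sum_(i <- s) c i) * x - \sum_(i <- s) ((x - a i) + (x - b i)).
  elim: s => [|i s IH]; first by rewrite !big_nil; ring.
  by rewrite !big_cons IH; ring.
ring.
Qed.

Theorem lemma6p2 (F : finFieldType) (u v : F) (k : nat) (ps : seq nat) :
  u != 0 -> v != 0 ->
  uniq ps -> all prime ps ->
  Rad #|F|.-1 = (k * \prod_(p <- ps) p)%N ->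
  let q1 := #|F|.-1 in
  let M := Mcount u v in
  let delta2 : rat := 1 - 2 * \sum_(p <- ps) (p%:R)^-1 in
  \sum_(p <- ps)
      (((M (p * k)%N k)%:R - theta p * (M k k)%:R)
       + ((M k (p * k)%N)%:R - theta p * (M k k)%:R))
    + delta2 * (M k k)%:R
  <= (M q1 q1)%:R.
Proof.
(* The bound holds for all [u], [v] and does not need [ps] to be duplicate-free. *)
move=> _ _ _ ps_prime Rad_q1; cbv zeta.
have q1_gt0 : (0 < #|F|.-1)%N by rewrite ltn_predRL card_finNzRing_gt1.
have k_gt0 : (0 < k)%N by move: (Rad_gt0 #|F|.-1); rewrite Rad_q1 muln_gt0 => /andP[].
have ps_gt0 : all (fun p => 0 < p)%N ps := sub_all (@prime_gt0) ps_prime.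
set S := Mset u v k k.
have natr_cardsD (A : {set F}) : (#|S|%:R - #|S :&: A|%:R : rat) = #|S :\: A|%:R.
  by rewrite -(cardsID A S) natrD addrAC subrr add0r.
under eq_big_seq => p p_in.
  have [p_pr p_gt0] := (allP ps_prime p p_in, allP ps_gt0 p p_in).
  rewrite theta_prime // !McountE MsetMl // MsetMr //.
  over.
rewrite sum_sieve_weights.
under eq_bigr do rewrite !natr_cardsD -natrD.
rewrite -natr_sum lerBlDr -natrD ler_nat McountE -(Mset_Rad u v q1_gt0 q1_gt0) Rad_q1.
exact: card_Mset_sieve.
Qed.
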